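(* Let $n>2$ be an integer, $p_1,\dots,p_n$ distinct primes, and $(X,r)$ an indecomposable multipermutation solution of the YBE with $|X|=p_1\cdots p_n$ and multipermutation level $n$. Then $|\mathcal G(X,r)|>p_1\cdots p_n$.
   Context: A solution of the Yang–Baxter equation (YBE) is a pair $(X,r)$, where $X$ is a non-empty set and $r\colon X\times X\to X\times X$, written $r(x,y)=(\sigma_x(y),\gamma_y(x))$, satisfies: $r^2=\mathrm{id}$; all $\sigma_x,\gamma_y$ are bijections of $X$; and $r_{12}r_{23}r_{12}=r_{23}r_{12}r_{23}$ on $X^3$, where $r_{12}=r\times\mathrm{id}_X$, $r_{23}=\mathrm{id}_X\times r$. $\mathcal G(X,r)=\langle\sigma_x:x\in X\rangle\le\mathrm{Sym}_X$; $(X,r)$ is indecomposable if $\mathcal G(X,r)$ is transitive on $X$. Retract: $x\sim y\iff\sigma_x=\sigma_y$, inducing a solution $\mathrm{Ret}(X,r)$ on $X/{\sim}$; $\mathrm{Ret}^k$ is the $k$-fold iterate; $(X,r)$ is multipermutation if $|\mathrm{Ret}^k(X,r)|=1$ for some $k\ge1$, the least such $k$ being its multipermutation level. *)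

From HB Require Import structures.
From mathcomp Require Import all_boot all_fingroup.
Set Implicit Arguments. Unset Strict Implicit. Unset Printing Implicit Defensive.
Local Open Scope group_scope.

(* Since X is finite, "sigma_x, gamma_y are bijections"
   is encoded by taking sigma, gamma : X -> {perm X}. *)
Section YBE.
Variable X : finType.
Variables (sigma gamma : X -> {perm X}).

Definition ybe_r (p : X * X) : X * X := (sigma p.1 p.2, gamma p.2 p.1).
Definition ybe_r12 (t : X * X * X) : X * X * X :=
  let: (x, y, z) := t in let: (u, v) := ybe_r (x, y) in (u, v, z).
Definition ybe_r23 (t : X * X * X) : X * X * X :=
  let: (x, y, z) := t in let: (v, w) := ybe_r (y, z) in (x, v, w).

Definition is_solution : Prop :=
  (forall p, ybe_r (ybe_r p) = p) /\
  (forall t, ybe_r12 (ybe_r23 (ybe_r12 t)) = ybe_r23 (ybe_r12 (ybe_r23 t))).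

Definition ybe_group : {set {perm X}} := <<[set sigma x | x : X]>>.

Definition indecomposable : Prop :=
  [transitive ybe_group, on [set: X] | 'P].

(* The equivalence ~_k on X whose classes are the points of Ret^k(X,r):
   x ~_0 y iff x = y;  x ~_{k+1} y iff sigma_x and sigma_y induce the same
   map on X/~_k, i.e. sigma_x(z) ~_k sigma_y(z) for all z.
   (~_1 is exactly sigma_x = sigma_y, the retract relation.) *)
Fixpoint ret_rel (k : nat) (x y : X) : bool :=
  match k with
  | 0 => x == y
  | k'.+1 => [forall z, ret_rel k' (sigma x z) (sigma y z)]
  end.

Definition ret_trivial (k : nat) : Prop := forall x y : X, ret_rel k x y.

Definition multipermutation : Prop := exists k, (0 < k)%N /\ ret_trivial k.

Definition mp_level (n : nat) : Prop :=
  [/\ (0 < n)%N, ret_trivial n & forall k, (0 < k < n)%N -> ~ ret_trivial k].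

End YBE.

(* Let (X, r) be an indecomposable solution of the Yang-Baxter equation whose
   permutation group G = <sigma_x : x in X> has |G| <= |X|, and assume |X| is
   squarefree.  We show that (X, r) then has multipermutation level at most 2;
   since a product of n > 2 distinct primes is squarefree, this contradicts
   level n, which proves |G| > p_1 ... p_n.

   For a regular G with base point x0, the cycle equation of the
   solution makes the maps rho_z(g x0) = g (sigma_(g^-1 z) x0) commute; they
   generate an abelian regular subgroup A of Sym X normalised by G, hence A is
   cyclic, A = <alpha>.  Every g in G acts on A by alpha |-> alpha ^+ expo g,
   and an arithmetic argument modulo the order d of alpha over the subgroup of
   those a in A whose lift to G centralises A shows that all sigma_x act on A
   alike, whence sigma_(sigma_x z) = sigma_(sigma_y z). *)

From mathcomp Require Import all_boot all_fingroup all_solvable all_algebra.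
Set Implicit Arguments. Unset Strict Implicit. Unset Printing Implicit Defensive.
Import GRing.Theory.

Definition squarefree (m : nat) : Prop := forall l, prime l -> ~~ (l * l %| m).

Lemma squarefree_gt0 m : squarefree m -> 0 < m.
Proof. by case: m => // /(_ 2 isT). Qed.

Lemma squarefreeS d m : d %| m -> squarefree m -> squarefree d.
Proof. by move=> dm sqf l /sqf; apply: contra => /dvdn_trans; apply. Qed.

Lemma squarefree_dvdP m e : squarefree m ->
  (forall l, prime l -> l %| m -> l %| e) -> m %| e.
Proof.
move=> sqf le; apply/dvdn_partP; first exact: squarefree_gt0.
move=> l; rewrite mem_primes => /and3P[l_pr m_gt0 lm].
have log1 : logn l m = 1.
  apply/eqP; rewrite eqn_leq -pfactor_dvdn // lm andbT leqNgt.
  by rewrite -pfactor_dvdn // (negPf (sqf l l_pr)).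
by rewrite p_part log1 expn1 le.
Qed.

Lemma squarefree_modP m a b : squarefree m ->
  (forall l, prime l -> l %| m -> a = b %[mod l]) -> a = b %[mod m].
Proof.
wlog ab : a b / a <= b => [hw sqf E | sqf E].
  have [/hw -> // | /ltnW ba] := leqP a b.
  by symmetry; apply: hw => // l lp lm; rewrite (E l).
apply/eqP; rewrite eq_sym eqn_mod_dvd //; apply: squarefree_dvdP => // l lp lm.
by rewrite -eqn_mod_dvd // eq_sym (E l).
Qed.

Lemma squarefree_prod_primes n (p : 'I_n -> nat) :
  (forall i, prime (p i)) -> injective p -> squarefree (\prod_(i < n) p i).
Proof.
move=> pP pI l lp; apply/negP => ll.
have [i li] : exists i, l = p i.
  move: (dvdn_trans (dvdn_mulr l (dvdnn l)) ll).
  rewrite Euclid_dvd_prod // big_orE => /existsP[i].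
  by rewrite dvdn_prime2 // => /eqP ->; exists i.
move: ll; rewrite (bigD1 i) //= li mulnC dvdn_pmul2r ?prime_gt0 //.
rewrite Euclid_dvd_prod // big_orE => /existsP[j /andP[ji]].
by rewrite dvdn_prime2 // => /eqP/pI/eqP; rewrite eq_sym (negPf ji).
Qed.

Lemma eqmod_Fp l a b : prime l -> (a = b %[mod l]) <-> (a%:R = b%:R :> 'F_l)%R.
Proof.
move=> lp; split=> [E | E]; first by rewrite -(Fp_nat_mod lp a) E Fp_nat_mod.
by rewrite -!(val_Fp_nat lp) E.
Qed.

(* If k + u k = 1 + k v mod l for all k with every u k a unit mod l, then
   v = 1 mod l: otherwise k = (1 - v)^-1 gives u k = 0 mod l. *)
Lemma affine_unit_mod_prime l v (u : nat -> nat) : prime l ->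
  (forall k, ~~ (l %| u k)) -> (forall k, k + u k = 1 + k * v %[mod l]) ->
  v = 1 %[mod l].
Proof.
move=> lp lu E; apply/(eqmod_Fp _ _ lp)/eqP; apply: contraT => v1.
set x : 'F_l := ((1 - v%:R)^-1)%R.
have xE : (1 + x * v%:R = x)%R.
  have nz : (1 - v%:R != 0 :> 'F_l)%R by rewrite subr_eq0 eq_sym.
  by rewrite -{1}(mulVf nz) -mulrDr subrK mulr1.
have := E (val x); move/(eqmod_Fp _ _ lp); rewrite !natrD natrM.
have -> : ((val x)%:R = x)%R by exact: natr_Zp.
rewrite mulr1n xE => Ex.
have /eqP : ((u (val x))%:R = 0 :> 'F_l)%R by apply: (addrI x); rewrite Ex addr0.
by rewrite -(dvdn_pcharf (pchar_Fp lp)) (negPf (lu _)).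
Qed.

Lemma affine_unit_mod N d v (u : nat -> nat) : squarefree N -> d %| N ->
  (forall k, coprime (u k) N) -> (forall k, k + u k = 1 + k * v %[mod d]) ->
  v = 1 %[mod d].
Proof.
move=> sqf dN cop E; apply: squarefree_modP (squarefreeS dN sqf) _ => l lp ld.
apply: (@affine_unit_mod_prime l v u lp) => k.
  rewrite -prime_coprime //; apply: coprime_dvdl (dvdn_trans ld dN) _.
  by rewrite coprime_sym.
by rewrite -[LHS](modn_dvdm _ ld) E modn_dvdm.
Qed.

Local Open Scope group_scope.

Lemma gen_sub_mulg_closed (gT : finGroupType) (S P : {set gT}) :
  1 \in P -> (forall s g, s \in S -> g \in P -> s * g \in P) -> <<S>> \subset P.
Proof.
move=> P1 SP.
pose H := [set h | [forall g in P, h * g \in P]].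
have gH : group_set H.
  apply/group_setP; split.
    by rewrite inE; apply/forall_inP => g gP; rewrite mul1g.
  move=> h1 h2; rewrite !inE => /forall_inP H1 /forall_inP H2.
  by apply/forall_inP => g gP; rewrite -mulgA; apply: H1; apply: H2.
have SH : <<S>> \subset Group gH.
  rewrite gen_subG; apply/subsetP => s sS.
  by rewrite inE; apply/forall_inP => g; apply: SP.
apply/subsetP => h /(subsetP SH); rewrite inE => /forall_inP /(_ 1 P1).
by rewrite mulg1.
Qed.

Lemma transitive_small_regular (T : finType) (G : {group {perm T}}) x0 :
  [transitive G, on [set: T] | 'P] -> #|G| <= #|T| ->
  {in G &, injective (fun g : {perm T} => g x0)}.
Proof.
move=> trG Gle.
have onto : [set (g : {perm T}) x0 | g in G] = [set: T].
  apply/setP => y; rewrite inE.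
  have : y \in orbit 'P G x0 by rewrite (atransP trG) ?inE.
  by case/orbitP => g gG <-; apply: imset_f.
apply/imset_injP; rewrite onto cardsT eqn_leq Gle andbT.
by have := leq_imset_card (fun g : {perm T} => g x0) G; rewrite onto cardsT.
Qed.

(* An abelian group of squarefree order is cyclic: its exponent, which is
   the order of some element, has the same primes as its order. *)
Lemma abelian_squarefree_cyclic (gT : finGroupType) (H : {group gT}) :
  abelian H -> squarefree #|H| -> cyclic H.
Proof.
move=> aH sqf.
have [x xH ex] := exponent_witness (abelian_nil aH).
apply/cyclicP; exists x; apply/eqP; rewrite eq_sym eqEcard cycle_subG xH /=.
rewrite -/(order x) -ex dvdn_leq ?exponent_gt0 //.
apply: squarefree_dvdP => // l lp lH.
have : l \in primes (exponent H) by rewrite primes_exponent mem_primes lp cardG_gt0.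
by rewrite mem_primes => /and3P[].
Qed.

Section CycleEquation.
Variables (X : finType) (sigma gamma : X -> {perm X}).
Hypothesis sol : is_solution sigma gamma.

(* The cycle equation sigma_x sigma_(sigma_x^-1 y) = sigma_y sigma_(sigma_y^-1 x)
   (composition written right to left), from involutivity and the YBE. *)
Lemma cycle_equation x y z :
  sigma x (sigma ((sigma x)^-1 y) z) = sigma y (sigma ((sigma y)^-1 x) z).
Proof.
case: sol => inv ybe.
have gammaE a b : gamma b a = (sigma (sigma a b))^-1 a.
  have [e1 _] := inv (a, b); rewrite /ybe_r /= in e1.
  by apply: (@perm_inj _ (sigma (sigma a b))); rewrite permKV e1.
have ybe1 a b c : sigma (sigma a b) (sigma (gamma b a) c) = sigma a (sigma b c).
  by have := ybe (a, b, c); rewrite /ybe_r12 /ybe_r23 /ybe_r /=; case.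
by rewrite -ybe1 permKV gammaE permKV.
Qed.

End CycleEquation.

Section RegularSolution.
Variables (X : finType) (sigma gamma : X -> {perm X}).
Hypothesis sol : is_solution sigma gamma.
Hypothesis trans : indecomposable sigma.
Variable x0 : X.
Local Notation G := (ybe_group sigma).
Hypothesis regG : {in G &, injective (fun g : {perm X} => g x0)}.

Lemma sigmaG x : sigma x \in G.
Proof. by apply: mem_gen; apply: imset_f. Qed.

(* Regularity identifies X with G: lift y is the element of G sending x0 to y. *)
Definition lift (y : X) : {perm X} := odflt 1 [pick g in G | g x0 == y].

Lemma lift_spec y : lift y \in G /\ lift y x0 = y.
Proof.
have : y \in orbit 'P G x0 by rewrite (atransP trans) ?inE.
case/orbitP => g gG <-; rewrite /lift.
by case: pickP => [h /andP[hG /eqP ->] | /(_ g)] //=; rewrite gG eqxx.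
Qed.

Lemma liftG y : lift y \in G. Proof. by case: (lift_spec y). Qed.
Lemma liftE y : lift y x0 = y. Proof. by case: (lift_spec y). Qed.

Lemma lift_uniq g : g \in G -> lift (g x0) = g.
Proof. by move=> gG; apply: regG; rewrite ?liftG ?liftE. Qed.

Lemma liftM g y : g \in G -> lift (g y) = lift y * g.
Proof.
by move=> gG; apply: regG; rewrite ?groupM ?liftG //= liftE permM liftE.
Qed.

Lemma lift_x0 : lift x0 = 1.
Proof. by rewrite -(perm1 x0) lift_uniq ?group1. Qed.

Definition rho (z y : X) : X := lift y (sigma ((lift y)^-1 z) x0).

Lemma rho_lift z g : g \in G -> rho z (g x0) = g (sigma (g^-1 z) x0).
Proof. by move=> gG; rewrite /rho lift_uniq. Qed.

Lemma rho_conj g z y : g \in G -> g (rho z y) = rho (g z) (g y).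
Proof. by move=> gG; rewrite /rho liftM // permM invMg permM permK. Qed.

(* The maps rho z commute: this is the cycle equation. *)
Lemma rho_comm z z' y : rho z (rho z' y) = rho z' (rho z y).
Proof.
rewrite {2 4}/rho; have aG := liftG y.
rewrite -!permM !rho_lift ?groupM ?sigmaG // !invMg !permM.
by rewrite (cycle_equation sol).
Qed.

(* Any nonempty set of points stable under every rho z is all of X, because
   its transport to G is stable under left multiplication by the sigma x. *)
Lemma rho_closed (Q : {set X}) p : p \in Q ->
  (forall z y, y \in Q -> rho z y \in Q) -> forall y, y \in Q.
Proof.
move=> pQ Qcl y.
pose P := [set g in G | lift p (g x0) \in Q].
have GP : G \subset P.
  apply: gen_sub_mulg_closed => [|_ g /imsetP[w _ ->]].
    by rewrite inE group1 perm1 liftE.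
  rewrite !inE => /andP[gG gQ]; rewrite groupM ?sigmaG //= permM.
  by rewrite -(permK g w) -rho_lift // rho_conj ?liftG // Qcl.
have := subsetP GP (lift ((lift p)^-1 y)) (liftG _).
by rewrite inE liftE permKV => /andP[].
Qed.

Lemma rho_inj z : injective (rho z).
Proof.
suff onto : rho z @: [set: X] = [set: X].
  have inj : {in [set: X] &, injective (rho z)} by apply/imset_injP; rewrite onto.
  by move=> a b; apply: inj; rewrite inE.
apply/setP => y; rewrite inE.
apply: (@rho_closed _ (rho z x0)); first by apply: imset_f; rewrite inE.
by move=> z' _ /imsetP[y' _ ->]; rewrite rho_comm imset_f ?inE.
Qed.

Definition rhoP z : {perm X} := perm (@rho_inj z).

Lemma rhoPE z y : rhoP z y = rho z y. Proof. by rewrite permE. Qed.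

Lemma rhoP_conj g z : g \in G -> rhoP z ^ g = rhoP (g z).
Proof.
by move=> gG; apply/permP => y; rewrite conjgE !permM !rhoPE rho_conj ?permKV.
Qed.

Definition Aset := [set rhoP z | z : X].
Local Notation A := <<Aset>>.

Lemma rhoA z : rhoP z \in A. Proof. by apply: mem_gen; apply: imset_f. Qed.

Lemma A_abelian : abelian A.
Proof.
rewrite abelian_gen; apply/centsP => _ /imsetP[z _ ->] _ /imsetP[z' _ ->].
by apply/permP => y; rewrite !permM !rhoPE rho_comm.
Qed.

Lemma A_conj a g : a \in A -> g \in G -> a ^ g \in A.
Proof.
move=> aA gG.
have : A \subset A :^ g^-1.
  rewrite gen_subG; apply/subsetP => _ /imsetP[z _ ->].
  by rewrite mem_conjg invgK rhoP_conj // rhoA.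
by move/subsetP/(_ a aA); rewrite mem_conjg invgK.
Qed.

Lemma A_trans y : exists2 a, a \in A & a x0 = y.
Proof.
have : y \in [set (a : {perm X}) x0 | a in A].
  apply: (@rho_closed _ x0); first by apply/imsetP; exists 1; rewrite ?group1 ?perm1.
  move=> z _ /imsetP[a aA ->]; apply/imsetP; exists (a * rhoP z).
    by rewrite groupM ?rhoA.
  by rewrite permM rhoPE.
by case/imsetP => a aA ->; exists a.
Qed.

(* A transitive abelian group acts regularly. *)
Lemma A_reg a b : a \in A -> b \in A -> a x0 = b x0 -> a = b.
Proof.
move=> aA bA e; apply/permP => y.
have [c cA <-] := A_trans y.
have [cab cbb] : commute c a /\ commute c b by split; apply: (centsP A_abelian).
by rewrite -!permM cab cbb !permM e.
Qed.

Lemma card_A : #|A| = #|X|.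
Proof.
have <- : #|[set (a : {perm X}) x0 | a in A]| = #|A|.
  by apply: card_in_imset => a b aA bA; apply: A_reg.
suff -> : [set (a : {perm X}) x0 | a in A] = [set: X] by rewrite cardsT.
by apply/setP => y; rewrite inE; have [a aA <-] := A_trans y; apply: imset_f.
Qed.


Hypothesis sqf : squarefree #|X|.
Local Notation N := #|X|.

Definition alpha : {perm X} := odflt 1 [pick a | A == <[a]>].

Lemma alphaE : A = <[alpha]>.
Proof.
have sqfA : squarefree #|A| by rewrite card_A.
have /cyclicP[a Aa] := abelian_squarefree_cyclic A_abelian sqfA.
by rewrite /alpha; case: pickP => [b /eqP // | /(_ a)]; rewrite Aa eqxx.
Qed.

Lemma ord_alpha : #[alpha] = N.
Proof. by rewrite /order -alphaE card_A. Qed.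

Lemma alphaA : alpha \in A. Proof. by rewrite alphaE cycle_id. Qed.

Definition expo (g : {perm X}) : nat :=
  oapp val 0 [pick k : 'I_#[alpha] | alpha ^ g == alpha ^+ k].

Lemma expoE g : g \in G -> alpha ^ g = alpha ^+ expo g.
Proof.
move=> gG; have : alpha ^ g \in <[alpha]> by rewrite -alphaE A_conj ?alphaA.
case/cyclePmin => k klt e.
by rewrite /expo; case: pickP => [j /eqP // | /(_ (Ordinal klt))]; rewrite e eqxx.
Qed.

Lemma expo_conj g a : g \in G -> a \in A -> a ^ g = a ^+ expo g.
Proof.
move=> gG; rewrite alphaE => /cycleP[j ->].
by rewrite conjXg expoE // -!expgnA mulnC.
Qed.

Lemma expo_coprime g : g \in G -> coprime (expo g) N.
Proof.
move=> gG; have := orderJ alpha g; rewrite expoE // orderXgcd ord_alpha.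
move=> e; rewrite /coprime gcdnC; apply/eqP.
have := divnK (dvdn_gcdl N (expo g)); rewrite e => /eqP.
by rewrite -[X in _ == X]muln1 eqn_pmul2l ?squarefree_gt0 // => /eqP.
Qed.

Lemma expoM g h : g \in G -> h \in G -> expo (g * h) = expo g * expo h %[mod N].
Proof.
move=> gG hG; apply/eqP; rewrite -ord_alpha -eq_expg_mod_order.
by rewrite -expoE ?groupM // conjgM expoE // conjXg expoE // -expgnA mulnC.
Qed.

Lemma expo1 : expo 1 = 1 %[mod N].
Proof. by apply/eqP; rewrite -ord_alpha -eq_expg_mod_order -expoE // conjg1. Qed.

Lemma expo_trivial g a : g \in G -> expo g = 1 %[mod N] -> a \in A -> a ^+ expo g = a.
Proof.
move=> gG e; rewrite alphaE => /cycleP[j ->].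
rewrite -expgnA; apply/eqP; rewrite eq_expg_mod_order ord_alpha.
by rewrite -modnMmr e modnMmr muln1.
Qed.

(* In the coordinates given by A, every g in G is an affine map. *)
Lemma expo_affine g a : g \in G -> a \in A -> g (a x0) = (a ^+ expo g) (g x0).
Proof. by move=> gG aA; rewrite -expo_conj // conjgE !permM permK. Qed.

Definition Acent : {set {perm X}} := [set a in A | expo (lift (a x0)) == 1 %[mod N]].

Lemma Acent_group_set : group_set Acent.
Proof.
apply/group_setP; split.
  by rewrite inE group1 perm1 lift_x0; apply/eqP; apply: expo1.
move=> a b; rewrite !inE => /andP[aA /eqP Ea] /andP[bA /eqP Eb]; rewrite groupM //=.
set c := lift (a x0); have cG : c \in G by apply: liftG.
have cb : c (b x0) = (a * b) x0 by rewrite expo_affine // expo_trivial // liftE permM.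
by apply/eqP; rewrite -cb liftM // expoM ?liftG // -modnMm Eb Ea modnMm.
Qed.

Canonical Acent_group := Group Acent_group_set.

Lemma Acent_sub : Acent \subset A.
Proof. by apply/subsetP => a; rewrite inE => /andP[]. Qed.

Lemma Acent_cong a b : a \in A -> b \in A ->
  expo (lift (a x0)) = expo (lift (b x0)) %[mod N] -> a * b^-1 \in Acent.
Proof.
move=> aA bA eW.
set e := lift (b x0); have eG : e \in G by apply: liftG.
have [c cA cx] := A_trans (e^-1 (a x0)).
have cAcent : c \in Acent.
  rewrite inE cA cx liftM ?groupV // expoM ?liftG ?groupV //.
  rewrite -modnMml eW modnMml -expoM ?groupV // mulgV; apply/eqP; apply: expo1.
have ae : a = b * c ^+ expo e.
  apply: A_reg => //; first by rewrite groupM ?groupX.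
  by rewrite permM -{1}(liftE (b x0)) -/e -expo_affine // cx permKV.
have bc : commute b (c ^+ expo e) by apply: (centsP A_abelian); rewrite ?groupX.
by rewrite ae bc -mulgA mulgV mulg1 groupX.
Qed.

Lemma alpha_norm : alpha \in 'N(Acent).
Proof. exact: subsetP (sub_abelian_norm A_abelian Acent_sub) _ alphaA. Qed.

Local Notation d := #[coset Acent_group alpha].

Lemma Acent_mod m m' : (alpha ^+ m * (alpha ^+ m')^-1 \in Acent) = (m == m' %[mod d]).
Proof.
have aN := alpha_norm.
rewrite -eq_expg_mod_order eq_mulgV1 -!morphX // -morphV ?groupX //.
rewrite -morphM ?groupV ?groupX //.
apply/idP/idP => [xD | /eqP x1]; first by apply/eqP; apply: coset_id.
by apply: coset_idr; rewrite // groupM ?groupV ?groupX.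
Qed.

Lemma d_dvd : d %| N.
Proof. by rewrite -ord_alpha; apply: morph_order; apply: alpha_norm. Qed.

Definition uexp (k : nat) : nat := expo (lift ((alpha ^+ k) x0)).

Lemma lift_alpha j k :
  lift ((alpha ^+ j) x0) ((alpha ^+ k) x0) = (alpha ^+ (j + k * uexp j)) x0.
Proof. by rewrite expo_affine ?liftG ?groupX ?alphaA // liftE -expgnA expgD permM. Qed.

Lemma uexp_mul j k : uexp (j + k * uexp j) = uexp k * uexp j %[mod N].
Proof. by rewrite /uexp -lift_alpha liftM ?liftG // expoM ?liftG. Qed.

(* Comparing lift (alpha^k x0) * lift (alpha x0) with its reverse. *)
Lemma uexp_affine k : k + uexp k = 1 + k * uexp 1 %[mod d].
Proof.
apply/eqP; rewrite -Acent_mod; apply: Acent_cong; rewrite ?groupX ?alphaA //.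
have := uexp_mul k 1; rewrite mul1n /uexp => ->.
by have := uexp_mul 1 k; rewrite /uexp => ->; rewrite mulnC.
Qed.

Lemma uexp1 : uexp 1 = 1 %[mod d].
Proof.
apply: affine_unit_mod sqf d_dvd _ uexp_affine => k.
exact/expo_coprime/liftG.
Qed.

Lemma expo_mod_d g : g \in G -> expo g = 1 %[mod d].
Proof.
move=> gG; have [a aA ax] := A_trans (g x0).
move: aA; rewrite alphaE => /cycleP[k ak]; rewrite ak in ax.
have -> : g = lift ((alpha ^+ k) x0) by rewrite ax lift_uniq.
apply/eqP; rewrite -(eqn_modDl k) -/(uexp k); apply/eqP.
by rewrite uexp_affine -modnDmr -modnMmr uexp1 modnMmr modnDmr muln1 addnC.
Qed.

Lemma sigma_lift z : sigma z = lift (rhoP z x0).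
Proof. by rewrite rhoPE /rho lift_x0 invg1 !perm1 lift_uniq ?sigmaG. Qed.

Lemma expo_sigma x : expo (sigma x) = expo (sigma x0) %[mod N].
Proof.
set r := rhoP x0; have rA : r \in A by apply: rhoA.
have rxE : rhoP x = r ^+ expo (lift x).
  by rewrite -expo_conj ?liftG // /r rhoP_conj ?liftG // liftE.
set c := rhoP x * r^-1.
have cAcent : c \in Acent.
  move: rA; rewrite alphaE => /cycleP[i ri].
  rewrite /c rxE ri -expgnA Acent_mod.
  by rewrite -modnMmr expo_mod_d ?liftG // modnMmr muln1.
have cA : c \in A by apply: (subsetP Acent_sub).
have rx : rhoP x = c * r by rewrite /c mulgKV.
rewrite !sigma_lift rx.
set e := lift (c x0); have eG : e \in G by apply: liftG.
have Ee : expo e = 1 %[mod N] by move: cAcent; rewrite inE => /andP[_ /eqP].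
have er : e (r x0) = (c * r) x0 by rewrite expo_affine // expo_trivial // liftE permM.
by rewrite -er liftM // expoM ?liftG // -modnMmr Ee modnMmr muln1.
Qed.

Lemma ret_trivial2 : ret_trivial sigma 2.
Proof.
move=> x y /=; apply/forallP => z; apply/forallP => w; apply/eqP.
suff -> : sigma (sigma x z) = sigma (sigma y z) by [].
rewrite (sigma_lift (sigma x z)) (sigma_lift (sigma y z)); congr (lift (_ x0)).
rewrite -(rhoP_conj z (sigmaG x)) -(rhoP_conj z (sigmaG y)) !expo_conj ?sigmaG ?rhoA //.
have : rhoP z \in <[alpha]> by rewrite -alphaE rhoA.
case/cycleP => i ->; rewrite -!expgnA.
suff /eqP -> : alpha ^+ (i * expo (sigma x)) == alpha ^+ (i * expo (sigma y)) by [].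
rewrite eq_expg_mod_order ord_alpha.
by rewrite -modnMmr expo_sigma modnMmr -[X in _ == X]modnMmr expo_sigma modnMmr.
Qed.

End RegularSolution.
(* With |X| = p_1 ... p_n squarefree, |G| <= |X| would make G regular and
   the level at most 2 < n. *)
Unset Implicit Arguments.
Theorem mainTheorem10 (n : nat) (p : 'I_n -> nat) (X : finType)
    (sigma gamma : X -> {perm X}) :
  (2 < n)%N ->
  (forall i, prime (p i)) ->
  injective p ->
  is_solution sigma gamma ->
  indecomposable sigma ->
  #|X| = (\prod_(i < n) p i)%N ->
  multipermutation sigma ->
  mp_level sigma n ->
  (\prod_(i < n) p i < #|ybe_group sigma|)%N.
Proof.
move=> n_gt2 pP pI sol trans cardX _ [_ _ not_lower].
have sqf : squarefree #|X| by rewrite cardX; apply: squarefree_prod_primes.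
have [x0 _] := card_gt0P (squarefree_gt0 sqf).
rewrite -cardX ltnNge; apply/negP => Gle.
have regG : {in ybe_group sigma &, injective (fun g : {perm X} => g x0)}.
  exact: transitive_small_regular trans Gle.
by apply: (not_lower 2); [rewrite n_gt2 | exact (ret_trivial2 sol trans regG sqf)].
Qed.
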